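(* Let $\kappa\ge2$, and let $\psi^+$ be a rooted binary topological tree on a taxon set $X$ with $|X|\ge 2$. Let $\psi_A^+$ and $\psi_B^+$ be the rooted subtrees descending from the two children of the root, on taxon sets $A$ and $B$ respectively, so $X=A\sqcup B$ and $\psi^+=(\psi_A^+,\psi_B^+)$. Then $$c_\kappa(\psi^+)=c_\kappa(\psi_A^+)\,c_\kappa(\psi_B^+)-\binom{\kappa}{2}.$$
   Context: For a rooted binary topological tree $\psi^+$ on a taxon set $X$ and $\kappa\ge2$, consider real $|X|$-way $\kappa\times\cdots\times\kappa$ tensors $P$ with one index per taxon. For $Y\subseteq X$, $P_Y$ is the marginalization (sum over indices of taxa not in $Y$); $\psi^+|_Y$ is the induced rooted subtree; a 2-clade is a pair of leaves that are exactly the leaf descendants of some vertex. Let $L(\psi^+)\subseteq\mathbb R^{\kappa^{|X|}}$ be the linear space of all real tensors $P$ such that for every $Y\subseteq X$ and every 2-clade $\{a,b\}$ of $\psi^+|_Y$, $P_Y$ is invariant under exchanging the $a$ and $b$ indices, and let $c_\kappa(\psi^+)=\dim L(\psi^+)$. (Equivalently $c_\kappa(\psi^+)=d_\kappa(\psi^+)+1$, where $d_\kappa(\psi^+)$ is the dimension of the affine space of such tensors whose entries sum to 1, the affine closure of the UE model.) For a tree with a single leaf, $L$ is all of $\mathbb R^\kappa$, so $c_\kappa=\kappa$. *)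

From HB Require Import structures.
From mathcomp Require Import all_boot all_order all_algebra.
From mathcomp Require Import all_fingroup reals.
Set Implicit Arguments. Unset Strict Implicit. Unset Printing Implicit Defensive.
Import Order.TTheory GRing.Theory Num.Theory.
Local Open Scope ring_scope.

(* A tree "on taxon set X" is a tree with pairwise distinct leaf labels whose
   leaf-label set is X. *)
Inductive rtree (T : Type) : Type :=
| Leaf of T
| Node of rtree T & rtree T.
Arguments Leaf {T}.
Arguments Node {T}.

Fixpoint leaves {T : Type} (t : rtree T) : seq T :=
  match t with
  | Leaf x => [:: x]
  | Node l r => leaves l ++ leaves r
  end.

Section Trees.
Variable T : finType.

Definition taxa_set (t : rtree T) : {set T} := [set x in leaves t].

(* induced rooted subtree psi|_Y (degree-two vertices suppressed);
   None when Y contains no leaf of t *)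
Fixpoint restrict (Y : {set T}) (t : rtree T) : option (rtree T) :=
  match t with
  | Leaf x => if x \in Y then Some (Leaf x) else None
  | Node l r =>
      match restrict Y l, restrict Y r with
      | Some l', Some r' => Some (Node l' r')
      | Some l', None => Some l'
      | None, Some r' => Some r'
      | None, None => None
      end
  end.

(* {a, b} is a 2-clade of t: some vertex has exactly a and b as leaf
   descendants (in a binary tree, such a vertex is a cherry). *)
Fixpoint is_2clade (t : rtree T) (a b : T) : bool :=
  match t with
  | Leaf _ => false
  | Node l r =>
      [|| match l, r with
          | Leaf x, Leaf y => ((x == a) && (y == b)) || ((x == b) && (y == a))
          | _, _ => false
          end, is_2clade l a b | is_2clade r a b]
  end.

Definition is_2clade_opt (t : option (rtree T)) (a b : T) : bool :=
  if t is Some t' then is_2clade t' a b else false.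

Variable R : realType.
Variable k : nat.

Definition taxon (X : {set T}) := {x : T | x \in X}.

Definition index_of (X : {set T}) := {ffun taxon X -> 'I_k}.
Definition tensor (X : {set T}) := {ffun index_of X -> R^o}.

(* marginalization P_Y evaluated at the Y-part of the multi-index w *)
Definition marg (X : {set T}) (P : tensor X) (Y : {set T}) (w : index_of X) : R :=
  \sum_(u : index_of X | [forall x : taxon X, (val x \in Y) ==> (u x == w x)]) P u.

Definition swap_idx (X : {set T}) (a b : taxon X) (w : index_of X) : index_of X :=
  [ffun x => w (tperm a b x)].

Definition sym_defect (X : {set T}) (c : {set T} * taxon X * taxon X * index_of X)
  (P : tensor X) : R^o :=
  let: (Y, a, b, w) := c in marg P Y w - marg P Y (swap_idx a b w).

Definition is_constraint (t : rtree T)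
  (c : {set T} * taxon (taxa_set t) * taxon (taxa_set t) * index_of (taxa_set t)) : bool :=
  let: (Y, a, b, w) := c in
  [&& Y \subset taxa_set t, val a \in Y, val b \in Y &
      is_2clade_opt (restrict Y t) (val a) (val b)].

Definition Lspace (t : rtree T) : {vspace tensor (taxa_set t)} :=
  (\bigcap_(c | @is_constraint t c) lker (linfun (@sym_defect (taxa_set t) c)))%VS.

Definition c_kappa (t : rtree T) : nat := \dim (Lspace t).

End Trees.

From HB Require Import structures.
From mathcomp Require Import all_boot all_order all_algebra.
From mathcomp Require Import all_fingroup reals ring.
Set Implicit Arguments. Unset Strict Implicit. Unset Printing Implicit Defensive.
Import GRing.Theory.
Local Open Scope ring_scope.

(* A multi-index on X is a pair (s, u) of multi-indices on A and on B, so a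
   tensor P on X is a matrix M(s, u) whose column u is the slice of P at u, a
   tensor on A, and whose row s is a tensor on B.  The 2-clades of t|_Y are
   those of tA|_Y, those of tB|_Y, and the cherry {a, b} when Y meets A in a
   single taxon a and B in a single taxon b.  Accordingly P lies in L(t) iff
   (1) all columns of M lie in L(tA) and all rows in L(tB), and
   (2) the cross marginal (x, y) |-> P_{a,b}(x, y) is symmetric.
   Under (1) the cross marginal does not depend on a, b (one-taxon marginals
   of tensors in L(tA) agree), so (2) is the vanishing of the k choose 2
   linear forms cross_defect, which are independent on the space
   L(tA) (x) L(tB) of matrices satisfying (1) (matrix units at constant
   multi-indices realise every value).  As dim L(tA) (x) L(tB) = c(tA) c(tB),
   we get c(t) = c(tA) c(tB) - (k choose 2). *)

Lemma linfun_linE (K : fieldType) (aT rT : vectType K) (f : aT -> rT) :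
  linear f -> forall v, linfun f v = f v.
Proof.
move=> f_lin v.
pose fL : {linear _ -> _} := HB.pack f (GRing.isLinear.Build _ _ _ _ f f_lin).
exact: (lfunE fL).
Qed.

Lemma memv_bigcapP (K : fieldType) (vT : vectType K) (I : finType) (P : pred I)
    (Us : I -> {vspace vT}) v :
  reflect (forall i, P i -> v \in Us i) (v \in (\bigcap_(i | P i) Us i)%VS).
Proof.
rewrite memvE; apply: (iffP subv_bigcapP) => H i Pi; first by rewrite memvE H.
by rewrite -memvE H.
Qed.

(* Tensor products of function spaces, realised inside functions on I * J:
   for subspaces U of K^I and V of K^J, the space U (x) V consists of the
   "matrices" M all of whose columns lie in U and all of whose rows lie in V.
   Its dimension is dim U * dim V: the products of basis vectors form a basis. *)
Section TensorSpace.
Variables (K : fieldType) (I J : finType).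
Local Notation VI := {ffun I -> K^o}.
Local Notation VJ := {ffun J -> K^o}.
Local Notation VM := {ffun (I * J)%type -> K^o}.

Definition fcol (j : J) (M : VM) : VI := [ffun i => M (i, j)].
Definition frow (i : I) (M : VM) : VJ := [ffun j => M (i, j)].

Lemma fcol_lin j : linear (fcol j).
Proof. by move=> a u v; apply/ffunP => i; rewrite !ffunE. Qed.

Lemma frow_lin i : linear (frow i).
Proof. by move=> a u v; apply/ffunP => j; rewrite !ffunE. Qed.

Definition tensor_space (U : {vspace VI}) (V : {vspace VJ}) : {vspace VM} :=
  ((\bigcap_(j : J) (linfun (fcol j) @^-1: U)) :&:
   (\bigcap_(i : I) (linfun (frow i) @^-1: V)))%VS.

Lemma mem_tensor_spaceP (U : {vspace VI}) (V : {vspace VJ}) M :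
  reflect ((forall j, fcol j M \in U) /\ (forall i, frow i M \in V))
          (M \in tensor_space U V).
Proof.
have colE j : (M \in linfun (fcol j) @^-1: U)%VS = (fcol j M \in U).
  by rewrite -memv_preim linfun_linE //; apply: fcol_lin.
have rowE i : (M \in linfun (frow i) @^-1: V)%VS = (frow i M \in V).
  by rewrite -memv_preim linfun_linE //; apply: frow_lin.
apply: (iffP memv_capP) => [[/memv_bigcapP HU /memv_bigcapP HV]|[HU HV]].
  by split=> [j|i]; [rewrite -colE HU | rewrite -rowE HV].
by split; apply/memv_bigcapP=> x _; [rewrite colE HU | rewrite rowE HV].
Qed.

Section Basis.
Variables (U : {vspace VI}) (V : {vspace VJ}).
Local Notation p := (\dim U).
Local Notation q := (\dim V).
Local Notation al := (vbasis U).
Local Notation be := (vbasis V).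

Definition outer (C : {ffun ('I_p * 'I_q)%type -> K^o}) : VM :=
  [ffun ij => \sum_(a < p) \sum_(b < q) C (a, b) * al`_a ij.1 * be`_b ij.2].

Lemma outer_lin : linear outer.
Proof.
move=> c u v; apply/ffunP => ij; rewrite !ffunE scaler_sumr -big_split.
apply: eq_bigr => a _; rewrite scaler_sumr -big_split; apply: eq_bigr => b _.
by rewrite !ffunE /GRing.scale /=; ring.
Qed.

Lemma fcol_outer C j :
  fcol j (outer C) = \sum_(a < p) (\sum_(b < q) C (a, b) * be`_b j) *: al`_a.
Proof.
apply/ffunP => i; rewrite sum_ffunE !ffunE; apply: eq_bigr => a _.
by rewrite ffunE /GRing.scale /= mulr_suml; apply: eq_bigr => b _; rewrite mulrAC.
Qed.

Lemma frow_outer C i :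
  frow i (outer C) = \sum_(b < q) (\sum_(a < p) C (a, b) * al`_a i) *: be`_b.
Proof.
apply/ffunP => j; rewrite sum_ffunE !ffunE exchange_big; apply: eq_bigr => b _.
by rewrite ffunE /GRing.scale /= mulr_suml.
Qed.

Lemma outer_eq0 C : outer C = 0 -> C = 0.
Proof.
move=> C0; apply/ffunP => -[a b]; rewrite ffunE.
have frA : free al by apply: basis_free (vbasisP U).
have frB : free be by apply: basis_free (vbasisP V).
have col0 j a' : \sum_(b < q) C (a', b) * be`_b j = 0.
  apply/(freeP frA): a'.
  by rewrite -fcol_outer C0; apply/ffunP => i; rewrite !ffunE.
apply: (freeP frB (fun b => C (a, b))); apply/ffunP => j.
by rewrite sum_ffunE ffunE -[RHS](col0 j a); apply: eq_bigr => b' _; rewrite ffunE.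
Qed.

Lemma outer_onto M : M \in tensor_space U V -> exists C, outer C = M.
Proof.
case/mem_tensor_spaceP => HU HV.
pose delta (i : I) : VI := [ffun i' => (i' == i)%:R].
pose cf (a : 'I_p) : VJ := [ffun j => coord al a (fcol j M)].
have cfV a : cf a \in V.
  suff -> : cf a = \sum_(i : I) coord al a (delta i) *: frow i M.
    by apply: memv_suml => i _; apply: memvZ.
  apply/ffunP => j; rewrite sum_ffunE ffunE.
  have -> : fcol j M = \sum_(i : I) M (i, j) *: delta i.
    apply/ffunP => i; rewrite sum_ffunE ffunE (bigD1 i) //= big1 => [|i' ne].
      by rewrite !ffunE eqxx /GRing.scale /= mulr1 addr0.
    by rewrite !ffunE eq_sym (negbTE ne) /GRing.scale /= mulr0.
  rewrite raddf_sum; apply: eq_bigr => i _; rewrite /= linearZ /= !ffunE.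
  by rewrite /GRing.scale /= mulrC.
exists [ffun ab : ('I_p * 'I_q)%type => coord be ab.2 (cf ab.1)].
apply/ffunP => -[i j]; rewrite ffunE /=.
have := congr1 (fun f : VI => f i) (coord_vbasis (HU j)).
rewrite sum_ffunE ffunE => ->; apply: eq_bigr => a _.
have := congr1 (fun f : VJ => f j) (coord_vbasis (cfV a)).
rewrite sum_ffunE ffunE => E.
rewrite ffunE /GRing.scale /= E mulr_suml; apply: eq_bigr => b _.
by rewrite !ffunE /GRing.scale /= mulrAC.
Qed.

Lemma dim_tensor_space : \dim (tensor_space U V) = (\dim U * \dim V)%N.
Proof.
have img : (linfun outer @: fullv)%VS = tensor_space U V.
  apply/vspaceP => M; apply/memv_imgP/idP => [[C _ ->]|/outer_onto[C <-]].
    rewrite linfun_linE; last exact: outer_lin.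
    apply/mem_tensor_spaceP; split=> [j|i]; [rewrite fcol_outer | rewrite frow_outer];
      by apply: memv_suml => ? _; apply/memvZ/vbasis_mem/mem_nth; rewrite size_tuple.
  by exists C; rewrite ?memvf ?linfun_linE //; apply: outer_lin.
have ker0 : lker (linfun outer) == 0%VS.
  apply/lker0P => C1 C2; rewrite !linfun_linE; try exact: outer_lin.
  move=> E; apply/eqP; rewrite -subr_eq0 addrC; apply/eqP/outer_eq0.
  by rewrite -scaleN1r outer_lin scaleN1r E addNr.
rewrite -img limg_dim_eq; last by rewrite (eqP ker0) capv0.
by rewrite dimvf /dim /= muln1 card_prod !card_ord.
Qed.

End Basis.
End TensorSpace.

Section Trees.
Variable T : finType.
Implicit Types (t l r : rtree T) (Y : {set T}).

Definition ropt_leaves (o : option (rtree T)) : seq T :=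
  if o is Some t then leaves t else [::].

Lemma restrict_leaves Y t : ropt_leaves (restrict Y t) = [seq x <- leaves t | x \in Y].
Proof.
elim: t => [x|l IHl r IHr] /=; first by case: ifP.
rewrite filter_cat -IHl -IHr.
by case: (restrict Y l) => [l'|]; case: (restrict Y r) => [r'|] //=; rewrite cats0.
Qed.

Lemma mem_restrict Y t t' x : restrict Y t = Some t' -> x \in leaves t' ->
  (x \in Y) && (x \in leaves t).
Proof. by move=> E; have := restrict_leaves Y t; rewrite E /= => ->; rewrite mem_filter. Qed.

Lemma eq_restrict Y Y' t : {in leaves t, Y =i Y'} -> restrict Y t = restrict Y' t.
Proof.
elim: t => [x|l IHl r IHr] /= H; first by rewrite H // mem_seq1.
rewrite IHl => [|x xl]; last by apply: H; rewrite mem_cat xl.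
by rewrite IHr // => x xr; apply: H; rewrite mem_cat xr orbT.
Qed.

Lemma leaves_gt0 t : (0 < size (leaves t))%N.
Proof. by elim: t => [x|l IHl r IHr] //=; rewrite size_cat addn_gt0 IHl. Qed.

Lemma taxa_set0 t : exists x, x \in taxa_set t.
Proof.
have := leaves_gt0 t; case El: (leaves t) => [|x s] // _.
by exists x; rewrite inE El mem_head.
Qed.

Lemma leaves1 t x : leaves t = [:: x] -> t = Leaf x.
Proof.
case: t => [y [->]|l r /= /(congr1 size)] //; rewrite size_cat.
by have := leaves_gt0 l; have := leaves_gt0 r; do 2!case: (size _) => [|[|?]].
Qed.

Lemma leaves2 t x y : leaves t = [:: x; y] -> t = Node (Leaf x) (Leaf y).
Proof.
case: t => [//|l r] /=; have := leaves_gt0 l; have := leaves_gt0 r.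
case El: (leaves l) => [|x1 [|x2 s]] //= r_gt0 _.
  by case=> <- Er; rewrite (leaves1 El) (leaves1 Er).
case=> _ _ /(congr1 size); rewrite size_cat.
by case: (size (leaves r)) r_gt0 => // n; rewrite addnS.
Qed.

Lemma restrict1 Y t x :
  [seq y <- leaves t | y \in Y] = [:: x] -> restrict Y t = Some (Leaf x).
Proof. by rewrite -restrict_leaves; case: (restrict Y t) => //= t' /leaves1 ->. Qed.

Lemma restrict2 Y t x y :
  [seq z <- leaves t | z \in Y] = [:: x; y] -> restrict Y t = Some (Node (Leaf x) (Leaf y)).
Proof. by rewrite -restrict_leaves; case: (restrict Y t) => //= t' /leaves2 ->. Qed.

Lemma is_2clade_mem t a b : is_2clade t a b -> (a \in leaves t) && (b \in leaves t).
Proof.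
elim: t => [x|l IHl r IHr] //= /or3P[H|/IHl|/IHr]; rewrite !mem_cat.
- case: l H {IHl} => [x|l1 l2] //; case: r {IHr} => [y|r1 r2] //=.
  by case/orP => /andP[/eqP <- /eqP <-]; rewrite !inE !eqxx ?orbT.
- by case/andP => -> ->.
- by case/andP => -> ->; rewrite !orbT.
Qed.

Lemma cherry_2clade (x y a b : T) : a \in [:: x; y] -> b \in [:: x; y] -> a != b ->
  is_2clade (Node (Leaf x) (Leaf y)) a b.
Proof. by rewrite /= !inE => /orP[]/eqP-> /orP[]/eqP->; rewrite ?eqxx ?orbT. Qed.

Lemma pair_2clade t a b : uniq (leaves t) -> a \in leaves t -> b \in leaves t ->
  a != b -> is_2clade_opt (restrict [set a; b] t) a b.
Proof.
move=> t_uniq a_t b_t ab.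
have ab_leaves : perm_eq [seq z <- leaves t | z \in [set a; b]] [:: a; b].
  apply: uniq_perm; rewrite ?filter_uniq //=; first by rewrite inE andbT.
  by move=> z; rewrite mem_filter !inE; case: eqP => [->|_]; case: eqP => [->|].
have := perm_mem ab_leaves; have := perm_size ab_leaves.
have := @restrict2 [set a; b] t.
case: [seq z <- leaves t | z \in [set a; b]] => [|u [|v [|? ?]]] //= r2 _ mem_uv.
by rewrite (r2 u v) //=; apply: cherry_2clade => //; rewrite mem_uv !inE eqxx ?orbT.
Qed.

Lemma clade_node_l Y l r a b :
  is_2clade_opt (restrict Y l) a b -> is_2clade_opt (restrict Y (Node l r)) a b.
Proof.
rewrite /=; case: (restrict Y l) => // l'; case: (restrict Y r) => [r'|] //= ->.
by rewrite orbT.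
Qed.

Lemma clade_node_r Y l r a b :
  is_2clade_opt (restrict Y r) a b -> is_2clade_opt (restrict Y (Node l r)) a b.
Proof.
rewrite /=; case: (restrict Y r) => // r'; case: (restrict Y l) => [l'|] //= ->.
by rewrite !orbT.
Qed.

Lemma clade_nodeP Y l r a b :
  is_2clade_opt (restrict Y (Node l r)) a b ->
  [\/ is_2clade_opt (restrict Y l) a b, is_2clade_opt (restrict Y r) a b,
      restrict Y l = Some (Leaf a) /\ restrict Y r = Some (Leaf b) |
      restrict Y l = Some (Leaf b) /\ restrict Y r = Some (Leaf a)].
Proof.
rewrite /=; case: (restrict Y l) => [l'|]; case: (restrict Y r) => [r'|] //=;
  try by move=> H; first [exact: Or41 H | exact: Or42 H].
case/or3P => [H|H|H]; [|exact: Or41|exact: Or42].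
case: l' H => [x|? ?] //; case: r' => [y|? ?] //.
by case/orP => /andP[/eqP <- /eqP <-]; [apply: Or43 | apply: Or44].
Qed.

End Trees.

Lemma sum_by_fibres (R : nmodType) (I J : finType) (p : I -> J) (Q : pred J)
    (C : pred I) (F : I -> R) :
  \sum_(j | Q j) \sum_(i | C i && (p i == j)) F i = \sum_(i | C i && Q (p i)) F i.
Proof.
rewrite [RHS](partition_big p Q) => [|i /andP[]//].
apply: eq_bigr => j Qj; apply: eq_bigl => i.
by case: (p i =P j) => [->|]; rewrite ?Qj ?andbT ?andbF.
Qed.

Lemma sum_indicator (R : pzSemiRingType) (I : finType) (C : pred I) (i0 : I) :
  \sum_(i | C i) ((i == i0)%:R : R) = (C i0)%:R.
Proof.
rewrite big_mkcond (bigD1 i0) //= big1 => [|i /negbTE ->]; last by case: (C i).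
by rewrite eqxx addr0; case: (C i0).
Qed.

Lemma tperm_map (U V : finType) (f : U -> V) : injective f ->
  forall a b x, f (tperm a b x) = tperm (f a) (f b) (f x).
Proof.
move=> f_inj a b x; case: (tpermP a b x) => [->|->|xa xb]; rewrite ?tpermL ?tpermR //.
by rewrite tpermD // (inj_eq f_inj) eq_sym; apply/eqP.
Qed.

Section Marginals.
Variables (T : finType) (R : realType) (k : nat).

Definition agree (Z Y : {set T}) (u w : index_of k Z) : bool :=
  [forall x : taxon Z, (val x \in Y) ==> (u x == w x)].

Lemma margE (Z : {set T}) (P : tensor R k Z) Y w :
  marg P Y w = \sum_(u | agree Y u w) P u.
Proof. by []. Qed.

Lemma marg_lin (Z : {set T}) (x : R) (P Q : tensor R k Z) Y w :
  marg (x *: P + Q) Y w = x * marg P Y w + marg Q Y w.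
Proof. by rewrite /marg mulr_sumr -big_split; apply: eq_bigr => u _; rewrite !ffunE. Qed.

Lemma sym_defect_lin (Z : {set T}) c : linear (@sym_defect T R k Z c).
Proof. by case: c => [[[Y a] b] w] x P Q /=; rewrite !marg_lin /GRing.scale /=; ring. Qed.

Lemma memLP (t : rtree T) (P : tensor R k (taxa_set t)) :
  reflect (forall c, is_constraint c -> sym_defect c P = 0) (P \in Lspace R k t).
Proof.
apply: (iffP (memv_bigcapP _ _ _)) => H c hc;
  have defectE := linfun_linE (sym_defect_lin c) P.
  by move: (H c hc); rewrite memv_ker defectE => /eqP.
by rewrite memv_ker defectE H.
Qed.

Lemma agree_eq (Z Y Y' : {set T}) : (forall x : taxon Z, (val x \in Y) = (val x \in Y')) ->
  @agree Z Y =2 @agree Z Y'.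
Proof. by move=> H u w; apply: eq_forallb => x; rewrite H. Qed.

Lemma margI (Z : {set T}) (P : tensor R k Z) Y w : marg P (Y :&: Z) w = marg P Y w.
Proof.
by rewrite !margE; apply: eq_bigl => u; apply: agree_eq => x; rewrite in_setI (valP x) andbT.
Qed.

Definition incl (A X : {set T}) (h : A \subset X) (x : taxon A) : taxon X :=
  exist (fun z => z \in X) (val x) (subsetP h _ (valP x)).

Lemma incl_inj (A X : {set T}) (h : A \subset X) : injective (incl h).
Proof. by move=> x y /(congr1 val) E; apply: val_inj. Qed.

Lemma inclP (A X : {set T}) (h : A \subset X) (x : taxon X) :
  val x \in A -> {xa : taxon A | x = incl h xa}.
Proof. by move=> xA; exists (exist _ (val x) xA); apply: val_inj. Qed.

Definition proj (A X : {set T}) (h : A \subset X) (w : index_of k X) : index_of k A :=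
  [ffun x => w (incl h x)].

Definition slice (X A B : {set T}) (hAX : A \subset X) (hBX : B \subset X)
    (P : tensor R k X) (t : index_of k B) : tensor R k A :=
  [ffun s => \sum_(w | (proj hAX w == s) && (proj hBX w == t)) P w].

Lemma proj_swap (A X : {set T}) (h : A \subset X) (a b : taxon A) w :
  proj h (swap_idx (incl h a) (incl h b) w) = swap_idx a b (proj h w).
Proof. by apply/ffunP => x; rewrite !ffunE (tperm_map (@incl_inj _ _ h)). Qed.

Lemma proj_swap_out (B X : {set T}) (h : B \subset X) (a b : taxon X) w :
  val a \notin B -> val b \notin B -> proj h (swap_idx a b w) = proj h w.
Proof.
move=> aB bB; apply/ffunP => y; rewrite !ffunE tpermD //.
  by apply/eqP => E; move: aB; rewrite E /= (valP y).
by apply/eqP => E; move: bB; rewrite E /= (valP y).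
Qed.

Section Split.
Variables (X A B : {set T}) (hAX : A \subset X) (hBX : B \subset X)
  (hX : X \subset A :|: B) (hdis : [disjoint A & B]).

Lemma in_AB (x : taxon X) : (val x \in A) || (val x \in B).
Proof. by rewrite -in_setU; apply/(subsetP hX)/valP. Qed.

Lemma notinB (x : T) : x \in A -> x \notin B.
Proof. by move=> xA; rewrite (disjointFr hdis xA). Qed.

Lemma agree_split Y u w : agree Y u w =
  agree Y (proj hAX u) (proj hAX w) && agree Y (proj hBX u) (proj hBX w).
Proof.
apply/forallP/andP => [H|[/forallP HA /forallP HB] x].
  by split; apply/forallP => x; rewrite !ffunE; apply: (H (incl _ x)).
by case/orP: (in_AB x) => /(inclP (_ : _ \subset X))[y ->];
  [have := HA y | have := HB y]; rewrite !ffunE.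
Qed.

Lemma proj_pair_bij : (0 < k)%N ->
  bijective (fun w : index_of k X => (proj hAX w, proj hBX w)).
Proof.
move=> k_gt0; apply: inj_card_bij => [u w [HA HB]|].
  apply/ffunP => x; case/orP: (in_AB x) => /(inclP (_ : _ \subset X))[y ->].
    by have := congr1 (fun f : index_of k A => f y) HA; rewrite !ffunE.
  by have := congr1 (fun f : index_of k B => f y) HB; rewrite !ffunE.
rewrite card_prod !card_ffun !card_sig !card_ord -expnD leq_pexp2l //.
have -> : (#|A| + #|B| = #|A :|: B|)%N.
  by rewrite cardsU (disjoint_setI0 hdis) cards0 subn0.
by apply: subset_leq_card; rewrite subUset hAX hBX.
Qed.

Lemma sum_slice (Ca : pred (index_of k A)) (Cb : pred (index_of k B)) P :
  \sum_(t | Cb t) \sum_(s | Ca s) slice hAX hBX P t s =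
  \sum_(w | Ca (proj hAX w) && Cb (proj hBX w)) P w.
Proof.
rewrite -(sum_by_fibres (proj hBX)); apply: eq_bigr => t Cbt.
under eq_bigr => s _ do rewrite ffunE.
rewrite (eq_bigr (fun s => \sum_(w | (proj hBX w == t) && (proj hAX w == s)) P w)).
  by rewrite (sum_by_fibres (proj hAX)); apply: eq_bigl => w; rewrite andbC.
by move=> s _; apply: eq_bigl => w; rewrite andbC.
Qed.

Lemma marg_slice Y P w : marg P Y w =
  \sum_(t | agree Y t (proj hBX w)) marg (slice hAX hBX P t) Y (proj hAX w).
Proof.
rewrite (sum_slice (agree Y ^~ (proj hAX w)) (agree Y ^~ (proj hBX w))).
by rewrite margE; apply: eq_bigl => u; rewrite agree_split.
Qed.

Lemma marg_full Y P w :
  marg P (Y :|: B) w = marg (slice hAX hBX P (proj hBX w)) Y (proj hAX w).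
Proof.
rewrite marg_slice (eq_bigl (pred1 (proj hBX w))) ?big_pred1_eq.
  rewrite !margE; apply: eq_bigl => u; apply: agree_eq => x.
  by rewrite in_setU (negbTE (notinB (valP x))) orbF.
move=> t; apply/forallP/eqP => [H|-> x]; last by rewrite eqxx implybT.
by apply/ffunP => y; apply/eqP; have := H y; rewrite in_setU (valP y) orbT.
Qed.

End Split.
End Marginals.

Section OneTree.
Variables (T : finType) (R : realType) (k : nat) (t : rtree T).
Local Notation X := (taxa_set t).
Local Notation Lt := (Lspace R k t).

Definition marg2 (P : tensor R k X) (a a' : taxon X) (x y : 'I_k) : R :=
  \sum_(s : index_of k X | (s a == x) && (s a' == y)) P s.

(* Two-taxon marginals of a tensor in L(t) are symmetric, because any two
   distinct taxa form a 2-clade of the subtree they induce. *)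
Lemma marg2_sym (P : tensor R k X) (a a' : taxon X) x y :
  uniq (leaves t) -> P \in Lt -> marg2 P a a' x y = marg2 P a' a x y.
Proof.
move=> t_uniq /memLP P_L; have [<-//|ne] := eqVneq a a'.
set Y := [set val a; val a'].
have agreeY u w : agree Y u w = (u a == w a) && (u a' == w a').
  apply/forallP/andP => [H|[/eqP E1 /eqP E2] z].
    by split; [have := H a | have := H a']; rewrite !inE eqxx ?orbT.
  by apply/implyP; rewrite !inE => /orP[] /eqP /val_inj ->; apply/eqP.
pose w : index_of k X := [ffun z => if z == a then x else y].
have wa : w a = x by rewrite ffunE eqxx.
have wa' : w a' = y by rewrite ffunE eq_sym (negbTE ne).
have leaf (z : taxon X) : val z \in leaves t by have := valP z; rewrite inE.
have constr : is_constraint (Y, a, a', w).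
  have aY : val a \in Y by rewrite !inE eqxx.
  have a'Y : val a' \in Y by rewrite !inE eqxx orbT.
  have YX : Y \subset X.
    by apply/subsetP => z; rewrite !inE => /orP[]/eqP->; apply: leaf.
  by rewrite /is_constraint /= YX aY a'Y pair_2clade ?leaf.
have := P_L _ constr; rewrite /= !margE => /eqP; rewrite subr_eq0 => /eqP E.
rewrite /marg2 (eq_bigl (agree Y ^~ w)) => [|s]; last by rewrite agreeY wa wa'.
rewrite E; apply: eq_bigl => s.
by rewrite agreeY [swap_idx _ _ _ a]ffunE [swap_idx _ _ _ a']ffunE tpermL tpermR wa wa' andbC.
Qed.

Lemma marg1_eq (P : tensor R k X) (a a' : taxon X) (x : 'I_k) :
  uniq (leaves t) -> P \in Lt ->
  \sum_(s : index_of k X | s a == x) P s = \sum_(s : index_of k X | s a' == x) P s.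
Proof.
move=> t_uniq P_L.
have fibres (b c : taxon X) : \sum_(s : index_of k X | s b == x) P s =
    \sum_(y : 'I_k) marg2 P b c x y.
  rewrite (sum_by_fibres (fun s : index_of k X => s c) xpredT).
  by apply: eq_bigl => s; rewrite andbT.
rewrite (fibres a a') (fibres a' a).
by apply: eq_bigr => y _; rewrite marg2_sym.
Qed.

(* The indicator of a constant multi-index lies in L(t): it is invariant
   under every exchange of indices. *)
Lemma const_in_L (i : 'I_k) :
  [ffun s : index_of k X => ((s == [ffun => i])%:R : R^o)] \in Lt.
Proof.
apply/memLP => -[[[Y a] b] w] /and4P[_ aY bY _] /=; rewrite !margE.
under eq_bigr do rewrite ffunE.
under [X in _ - X]eq_bigr do rewrite ffunE.
rewrite !sum_indicator.
suff -> : agree Y [ffun=> i] w = agree Y [ffun=> i] (swap_idx a b w) by rewrite subrr.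
have swapY z : val z \in Y -> val (tperm a b z) \in Y by case: tpermP.
apply/forallP/forallP => H z; apply/implyP => zY;
  by have := H (tperm a b z); rewrite swapY // !ffunE ?tpermK.
Qed.

End OneTree.

Section Subtree.
Variables (T : finType) (R : realType) (k : nat) (t tS : rtree T) (B : {set T})
  (hSX : taxa_set tS \subset taxa_set t) (hBX : B \subset taxa_set t)
  (hX : taxa_set t \subset taxa_set tS :|: B) (hdis : [disjoint taxa_set tS & B]).

(* Slices of a tensor in L(t) lie in L(tS): a constraint (Y, a, b) of tS
   becomes the constraint (Y u B, a, b) of t. *)
Lemma slice_in_L :
  (forall Y a b, is_2clade_opt (restrict Y tS) a b -> is_2clade_opt (restrict Y t) a b) ->
  (0 < k)%N -> forall P, P \in Lspace R k t ->
  forall u, slice hSX hBX P u \in Lspace R k tS.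
Proof.
move=> clade_lift k_gt0 P /memLP P_L u.
apply/memLP => -[[[Y a] b] s] /and4P[YS aY bY Yclade] /=.
have [g pg gp] := proj_pair_bij hSX hBX hX hdis k_gt0.
have [ws wu] : proj hSX (g (s, u)) = s /\ proj hBX (g (s, u)) = u.
  by have := gp (s, u); case.
have aB := notinB hdis (valP a); have bB := notinB hdis (valP b).
have := P_L (Y :|: B, incl hSX a, incl hSX b, g (s, u)).
rewrite /= !(marg_full hSX hBX hX hdis) proj_swap proj_swap_out ?ws ?wu //.
apply; rewrite /is_constraint /= !in_setU aY bY subUset (subset_trans YS hSX) hBX /=.
apply: clade_lift; rewrite (@eq_restrict _ _ Y) // => x x_tS.
by rewrite in_setU (negbTE (notinB hdis _)) ?orbF // inE.
Qed.

Lemma marg_swap_of_slices P : (forall u, slice hSX hBX P u \in Lspace R k tS) ->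
  forall Y (a b : taxon (taxa_set t)) w,
  is_2clade_opt (restrict Y tS) (val a) (val b) -> marg P Y w = marg P Y (swap_idx a b w).
Proof.
move=> P_slices Y a b w; case ES: (restrict Y tS) => [t'|] //= clade.
have /andP[a_t' b_t'] := is_2clade_mem clade.
have /andP[aY a_tS] := mem_restrict ES a_t'.
have /andP[bY b_tS] := mem_restrict ES b_t'.
have [aS Ea] : {aS | a = incl hSX aS} by apply: inclP; rewrite inE.
have [bS Eb] : {bS | b = incl hSX bS} by apply: inclP; rewrite inE.
subst a b; move: aY bY => /= aY bY.
have aB := notinB hdis (valP aS); have bB := notinB hdis (valP bS).
rewrite !(marg_slice hSX hBX hX) proj_swap proj_swap_out //.
apply: eq_bigr => u _.
have /memLP/(_ (Y :&: taxa_set tS, aS, bS, proj hSX w)) := P_slices u.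
rewrite /= !margI => H; apply/eqP; rewrite -subr_eq0; apply/eqP/H.
rewrite /is_constraint /= subsetIr !in_setI (valP aS) (valP bS) aY bY /=.
by rewrite (@eq_restrict _ _ Y) ?ES // => x x_tS; rewrite in_setI inE x_tS andbT.
Qed.

End Subtree.

Lemma card_pairs k : #|{: {p : 'I_k * 'I_k | (p.1 < p.2)%N}}| = 'C(k, 2).
Proof.
rewrite card_sig -bin2_sum big_mkord -sum1_card.
rewrite -(pair_big_dep xpredT (fun i j : 'I_k => (i < j)%N) (fun _ _ => 1%N)) /=.
rewrite (exchange_big_dep xpredT) //=; apply: eq_bigr => j _.
by rewrite (big_ord_narrow_cond (P := xpredT) (ltnW (ltn_ord j))) sum1_card card_ord.
Qed.

Lemma agree1 (T : finType) (k : nat) (Z Y : {set T}) (z0 : taxon Z) :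
  (forall x : taxon Z, (val x \in Y) = (x == z0)) ->
  forall u w : index_of k Z, agree Y u w = (u z0 == w z0).
Proof.
move=> Yz0 u w; apply/forallP/idP => [/(_ z0)|/eqP E x]; first by rewrite Yz0 eqxx.
by rewrite Yz0; apply/implyP => /eqP ->; rewrite E.
Qed.

Section Root.
Variables (R : realType) (T : finType) (k : nat) (k_gt0 : (0 < k)%N)
  (tA tB : rtree T) (t_uniq : uniq (leaves (Node tA tB))).
Local Notation X := (taxa_set (Node tA tB)).
Local Notation A := (taxa_set tA).
Local Notation B := (taxa_set tB).
Variables (a0 : taxon A) (b0 : taxon B).

Lemma AX : A \subset X.
Proof. by apply/subsetP => x; rewrite !inE mem_cat => ->. Qed.

Lemma BX : B \subset X.
Proof. by apply/subsetP => x; rewrite !inE mem_cat => ->; rewrite orbT. Qed.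

Lemma X_AB : X \subset A :|: B.
Proof. by apply/subsetP => x; rewrite !inE mem_cat. Qed.

Lemma X_BA : X \subset B :|: A.
Proof. by rewrite setUC X_AB. Qed.

Lemma disjointAB : [disjoint A & B].
Proof.
move: t_uniq; rewrite /= cat_uniq => /and3P[_ /hasPn AB _].
rewrite -setI_eq0; apply/eqP/setP => x; rewrite !inE.
by apply/negP => /andP[xA /AB]; rewrite xA.
Qed.

Lemma disjointBA : [disjoint B & A].
Proof. by rewrite disjoint_sym disjointAB. Qed.

Lemma uniqA : uniq (leaves tA).
Proof. by move: t_uniq; rewrite /= cat_uniq => /and3P[]. Qed.

Lemma uniqB : uniq (leaves tB).
Proof. by move: t_uniq; rewrite /= cat_uniq => /and3P[]. Qed.

Local Notation pA := (proj AX).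
Local Notation pB := (proj BX).
Local Notation sliceA := (slice AX BX).
Local Notation sliceB := (slice BX AX).

Definition cross_marg (P : tensor R k X) (a : taxon A) (b : taxon B) (x y : 'I_k) : R :=
  \sum_(w | (pA w a == x) && (pB w b == y)) P w.

(* When all slices lie in L(tA) and L(tB), the cross marginal does not depend
   on the chosen taxa, since the one-taxon marginals of the slices do not. *)
Lemma cross_marg_indep P : (forall u, sliceA P u \in Lspace R k tA) ->
  (forall s, sliceB P s \in Lspace R k tB) ->
  forall a b x y, cross_marg P a b x y = cross_marg P a0 b0 x y.
Proof.
move=> PA PB a b x y; rewrite /cross_marg.
rewrite -(sum_slice AX BX (fun s => s a == x) (fun u => u b == y)).
under eq_bigr => u _ do rewrite (marg1_eq a a0 x uniqA (PA u)).
rewrite (sum_slice AX BX (fun s => s a0 == x) (fun u => u b == y)).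
rewrite (eq_bigl (fun w => (pB w b == y) && (pA w a0 == x))) => [|w]; last by rewrite andbC.
rewrite -(sum_slice BX AX (fun u => u b == y) (fun s => s a0 == x)).
under eq_bigr => s _ do rewrite (marg1_eq b b0 y uniqB (PB s)).
rewrite (sum_slice BX AX (fun u => u b0 == y) (fun s => s a0 == x)).
by apply: eq_bigl => w; rewrite andbC.
Qed.

Lemma marg_cherry P : (forall u, sliceA P u \in Lspace R k tA) ->
  (forall s, sliceB P s \in Lspace R k tB) ->
  forall Y (a b : taxon X),
  restrict Y tA = Some (Leaf (val a)) -> restrict Y tB = Some (Leaf (val b)) ->
  forall w, marg P Y w = cross_marg P a0 b0 (w a) (w b).
Proof.
move=> PA PB Y a b rA rB w.
have only (t : rtree T) (c : taxon X) : restrict Y t = Some (Leaf (val c)) ->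
    forall x : taxon (taxa_set t), (val x \in Y) = (val x == val c).
  move=> rt x; have := restrict_leaves Y t; rewrite rt /= => E.
  by rewrite -mem_seq1 E mem_filter -[_ \in leaves t]inE (valP x) andbT.
have [aA Ea] : {aA | a = incl AX aA}.
  by apply: inclP; have /andP[_] := mem_restrict rA (mem_head _ _); rewrite inE.
have [bB Eb] : {bB | b = incl BX bB}.
  by apply: inclP; have /andP[_] := mem_restrict rB (mem_head _ _); rewrite inE.
subst a b; rewrite -(cross_marg_indep PA PB aA bB) margE; apply: eq_bigl => u.
rewrite (agree_split AX BX X_AB) (@agree1 _ _ _ _ aA) ?(@agree1 _ _ _ _ bB) ?ffunE //.
  by move=> x; rewrite (only _ _ rB).
by move=> x; rewrite (only _ _ rA).
Qed.

Lemma restrict_a0b0 :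
  restrict [set val a0; val b0] tA = Some (Leaf (val a0)) /\
  restrict [set val a0; val b0] tB = Some (Leaf (val b0)).
Proof.
have a0A : val a0 \in leaves tA by have := valP a0; rewrite inE.
have b0B : val b0 \in leaves tB by have := valP b0; rewrite inE.
have b0A : val b0 \notin leaves tA by have := notinB disjointBA (valP b0); rewrite inE.
have a0B : val a0 \notin leaves tB by have := notinB disjointAB (valP a0); rewrite inE.
split; apply: restrict1.
  rewrite (@eq_in_filter _ _ (pred1 (val a0))) ?filter_pred1_uniq ?uniqA // => z zA.
  by rewrite !inE; case: (z =P val b0) => [zb0|]; rewrite ?orbF //; move: b0A; rewrite -zb0 zA.
rewrite (@eq_in_filter _ _ (pred1 (val b0))) ?filter_pred1_uniq ?uniqB // => z zB.
by rewrite !inE; case: (z =P val a0) => // za0; move: a0B; rewrite -za0 zB.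
Qed.

(* The cross marginal of a tensor in L(t) is symmetric: {a0, b0} is a
   cherry of t|_{a0,b0}. *)
Lemma cross_marg_sym P : P \in Lspace R k (Node tA tB) ->
  (forall u, sliceA P u \in Lspace R k tA) -> (forall s, sliceB P s \in Lspace R k tB) ->
  forall x y, cross_marg P a0 b0 x y = cross_marg P a0 b0 y x.
Proof.
move=> PL PA PB x y.
have [g _ gp] := proj_pair_bij AX BX X_AB disjointAB k_gt0.
pose w := g ([ffun => x], [ffun => y]).
have [wa wb] : w (incl AX a0) = x /\ w (incl BX b0) = y.
  case: (gp ([ffun => x], [ffun => y])) => /ffunP/(_ a0) + /ffunP/(_ b0).
  by rewrite !ffunE.
have [rA rB] := restrict_a0b0.
have Y_X : [set val a0; val b0] \subset X.
  apply/subsetP => z; rewrite !inE mem_cat => /orP[]/eqP->.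
    by have := valP a0; rewrite inE => ->.
  by have := valP b0; rewrite inE => ->; rewrite orbT.
have := memLP _ PL ([set val a0; val b0], incl AX a0, incl BX b0, w) => /=.
rewrite !(marg_cherry PA PB (a := incl AX a0) (b := incl BX b0)) //.
rewrite [swap_idx _ _ _ (incl AX a0)]ffunE [swap_idx _ _ _ (incl BX b0)]ffunE.
rewrite tpermL tpermR wa wb => /(_ _)/subr0_eq; apply.
by rewrite /is_constraint /= Y_X !in_set2 !eqxx orbT /= rA rB /= !eqxx.
Qed.

(* Conversely, slices in L(tA), L(tB) and a symmetric cross marginal put P in
   L(t): each 2-clade of t|_Y comes from tA, from tB, or is a cherry. *)
Lemma L_node_of_slices P :
  (forall u, sliceA P u \in Lspace R k tA) -> (forall s, sliceB P s \in Lspace R k tB) ->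
  (forall x y, cross_marg P a0 b0 x y = cross_marg P a0 b0 y x) ->
  P \in Lspace R k (Node tA tB).
Proof.
move=> PA PB Psym; apply/memLP => -[[[Y a] b] w] /and4P[_ _ _ clade] /=.
apply/eqP; rewrite subr_eq0; apply/eqP.
case: (clade_nodeP clade) => [cA|cB|[rA rB]|[rA rB]].
- exact: (marg_swap_of_slices X_AB disjointAB PA w cA).
- exact: (marg_swap_of_slices X_BA disjointBA PB w cB).
- by rewrite !(marg_cherry PA PB rA rB) !ffunE tpermL tpermR.
- by rewrite !(marg_cherry PA PB rA rB) !ffunE tpermL tpermR.
Qed.

Local Notation Mat := {ffun (index_of k A * index_of k B)%type -> R^o}.
Local Notation Pairs := {p : 'I_k * 'I_k | (p.1 < p.2)%N}.

Definition glue (M : Mat) : tensor R k X := [ffun w => M (pA w, pB w)].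

Definition cross_mx (M : Mat) (x y : 'I_k) : R :=
  \sum_(q : (index_of k A * index_of k B)%type | (q.1 a0 == x) && (q.2 b0 == y)) M q.

Definition cross_defect (M : Mat) : {ffun Pairs -> R^o} :=
  [ffun p => cross_mx M (val p).1 (val p).2 - cross_mx M (val p).2 (val p).1].

Lemma glue_lin : linear glue.
Proof. by move=> c M N; apply/ffunP => w; rewrite !ffunE. Qed.

Lemma cross_defect_lin : linear cross_defect.
Proof.
move=> c M N; apply/ffunP => p; rewrite !ffunE /cross_mx.
have sumD (C : pred (index_of k A * index_of k B)%type) :
    \sum_(q | C q) (c *: M + N) q = c * \sum_(q | C q) M q + \sum_(q | C q) N q.
  by rewrite mulr_sumr -big_split; apply: eq_bigr => q _; rewrite !ffunE.
by rewrite !sumD /GRing.scale /=; ring.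
Qed.

Lemma glue_bij : bijective glue.
Proof.
have [g pg gp] := proj_pair_bij AX BX X_AB disjointAB k_gt0.
exists (fun P : tensor R k X => [ffun q => P (g q)] : Mat) => [M|P].
  by apply/ffunP => q; rewrite !ffunE gp.
by apply/ffunP => w; rewrite !ffunE pg.
Qed.

Lemma sliceA_glue M u : sliceA (glue M) u = fcol u M.
Proof.
have [g pg gp] := proj_pair_bij AX BX X_AB disjointAB k_gt0.
apply/ffunP => s; rewrite !ffunE (eq_bigl (pred1 (g (s, u)))) ?big_pred1_eq.
  by rewrite ffunE; case: (gp (s, u)) => /= -> ->.
move=> w /=; apply/andP/eqP => [[/eqP <- /eqP <-]|->]; first by rewrite pg.
by case: (gp (s, u)) => /= -> ->.
Qed.

Lemma sliceB_glue M s : sliceB (glue M) s = frow s M.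
Proof.
have [g pg gp] := proj_pair_bij AX BX X_AB disjointAB k_gt0.
apply/ffunP => u; rewrite !ffunE (eq_bigl (pred1 (g (s, u)))) ?big_pred1_eq.
  by rewrite ffunE; case: (gp (s, u)) => /= -> ->.
move=> w /=; apply/andP/eqP => [[/eqP <- /eqP <-]|->]; first by rewrite pg.
by case: (gp (s, u)) => /= -> ->.
Qed.

Lemma cross_marg_glue M x y : cross_marg (glue M) a0 b0 x y = cross_mx M x y.
Proof.
rewrite /cross_mx (reindex (fun w : index_of k X => (pA w, pB w))) /=.
  by apply: eq_bigr => w _; rewrite ffunE.
exact/onW_bij/(proj_pair_bij AX BX X_AB disjointAB k_gt0).
Qed.

Lemma cross_defect0P M :
  reflect (forall x y, cross_mx M x y = cross_mx M y x) (cross_defect M == 0).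
Proof.
apply: (iffP eqP) => [M0 x y|Msym]; last first.
  by apply/ffunP => p; rewrite !ffunE Msym subrr.
have [xy|yx|/val_inj ->//] := ltngtP x y.
  have := congr1 (fun f : {ffun Pairs -> R^o} => f (exist _ (x, y) xy)) M0.
  by rewrite !ffunE => /subr0_eq.
have := congr1 (fun f : {ffun Pairs -> R^o} => f (exist _ (y, x) yx)) M0.
by rewrite !ffunE => /subr0_eq.
Qed.

Definition Wprod := tensor_space (Lspace R k tA) (Lspace R k tB).
Definition Wsym := (Wprod :&: lker (linfun cross_defect))%VS.

Lemma mem_WsymP M : reflect [/\ forall u, fcol u M \in Lspace R k tA,
    forall s, frow s M \in Lspace R k tB & cross_defect M == 0] (M \in Wsym).
Proof.
have kerE : (M \in lker (linfun cross_defect)) = (cross_defect M == 0).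
  by rewrite memv_ker linfun_linE //; apply: cross_defect_lin.
apply: (iffP memv_capP); rewrite kerE.
  by case=> /mem_tensor_spaceP[].
by case=> MA MB M0; split=> //; apply/mem_tensor_spaceP.
Qed.


Lemma glue_in_L M : (glue M \in Lspace R k (Node tA tB)) = (M \in Wsym).
Proof.
apply/idP/mem_WsymP => [gL|[MA MB M0]].
  have MA u : fcol u M \in Lspace R k tA.
    rewrite -sliceA_glue; apply: (slice_in_L AX BX X_AB disjointAB) gL u => // Y a b.
    exact: clade_node_l.
  have MB s : frow s M \in Lspace R k tB.
    rewrite -sliceB_glue; apply: (slice_in_L BX AX X_BA disjointBA) gL s => // Y a b.
    exact: clade_node_r.
  split=> //; apply/cross_defect0P => x y; rewrite -!cross_marg_glue.
  by apply: cross_marg_sym => // [u|s]; rewrite ?sliceA_glue ?sliceB_glue.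
apply: L_node_of_slices => [u|s|x y]; rewrite ?sliceA_glue ?sliceB_glue //.
by rewrite !cross_marg_glue; apply/cross_defect0P.
Qed.

Definition elem_mx (i j : 'I_k) : Mat :=
  [ffun q => ((q.1 == [ffun => i]) && (q.2 == [ffun => j]))%:R].

Lemma elem_in_Wprod i j : elem_mx i j \in Wprod.
Proof.
apply/mem_tensor_spaceP; split=> [u|s].
  have -> : fcol u (elem_mx i j) = ((u == [ffun => j])%:R : R) *:
      [ffun s : index_of k A => ((s == [ffun => i])%:R : R^o)].
    by apply/ffunP => s; rewrite !ffunE /GRing.scale /= -natrM mulnb andbC.
  exact/memvZ/const_in_L.
have -> : frow s (elem_mx i j) = ((s == [ffun => i])%:R : R) *:
    [ffun u : index_of k B => ((u == [ffun => j])%:R : R^o)].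
  by apply/ffunP => u; rewrite !ffunE /GRing.scale /= -natrM mulnb.
exact/memvZ/const_in_L.
Qed.

Lemma cross_mx_elem i j x y : cross_mx (elem_mx i j) x y = ((i == x) && (j == y))%:R.
Proof.
rewrite /cross_mx (eq_bigr (fun q => ((q == ([ffun => i], [ffun => j]))%:R : R))).
  by rewrite sum_indicator /= !ffunE.
by move=> [s u] _; rewrite ffunE /= xpair_eqE.
Qed.

Lemma cross_defect_onto : (linfun cross_defect @: Wprod)%VS = fullv.
Proof.
apply/eqP; rewrite eqEsubv subvf; apply/subvP => f _.
have -> : f = \sum_(p : Pairs) f p *: [ffun p' => ((p' == p)%:R : R^o)].
  apply/ffunP => p; rewrite sum_ffunE (bigD1 p) //= big1 => [|p' ne].
    by rewrite !ffunE eqxx /GRing.scale /= mulr1 addr0.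
  by rewrite !ffunE eq_sym (negbTE ne) /GRing.scale /= mulr0.
apply: memv_suml => -[[i j] ij] _; apply/memvZ/memv_imgP.
exists (elem_mx i j); first exact: elem_in_Wprod.
rewrite linfun_linE; last exact: cross_defect_lin.
apply/ffunP => -[[x y] xy]; rewrite !ffunE !cross_mx_elem /=.
have -> : (i == y) && (j == x) = false.
  apply/negP => /andP[/eqP iy /eqP jx].
  by move: ij; rewrite iy jx /= => /(ltn_trans xy); rewrite ltnn.
by rewrite subr0 -(inj_eq val_inj) /= xpair_eqE (eq_sym x) (eq_sym y).
Qed.

Lemma Lspace_node : Lspace R k (Node tA tB) = (linfun glue @: Wsym)%VS.
Proof.
have [unglue glueK unglueK] := glue_bij.
apply/vspaceP => P; rewrite -[P in LHS]unglueK glue_in_L.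
have glueE := linfun_linE glue_lin.
apply/idP/memv_imgP => [MW|[M MW ->]]; last by rewrite glueE glueK.
by exists (unglue P); rewrite ?glueE ?unglueK.
Qed.

Lemma dim_node : (c_kappa R k (Node tA tB) + 'C(k, 2) = c_kappa R k tA * c_kappa R k tB)%N.
Proof.
have glue_ker : lker (linfun glue) = 0%VS.
  by apply/eqP/lker0P => M N; rewrite !(linfun_linE glue_lin); apply: (bij_inj glue_bij).
rewrite /c_kappa Lspace_node limg_dim_eq; last by rewrite glue_ker capv0.
rewrite -dim_tensor_space -/Wprod -(limg_ker_dim (linfun cross_defect) Wprod).
by rewrite cross_defect_onto dimvf /dim /= muln1 card_pairs.
Qed.

End Root.

Theorem theorem4p1 (R : realType) (T : finType) (k : nat) (hk : (2 <= k)%N)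
  (tA tB : rtree T) (huniq : uniq (leaves (Node tA tB))) :
  ((c_kappa R k (Node tA tB))%:Z
   = (c_kappa R k tA * c_kappa R k tB)%:Z - ('C(k, 2))%:Z)%R.
Proof.
have k_gt0 : (0 < k)%N by apply: leq_trans hk.
have [a aA] := taxa_set0 tA; have [b bB] := taxa_set0 tB.
have dim := dim_node R k_gt0 huniq (exist _ a aA) (exist _ b bB).
by rewrite -dim PoszD addrK.
Qed.
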